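(* Let $X$ be a compact metric space and $\tau_1,\dots,\tau_N:X\to X$ continuous maps with $X=\bigcup_{i=1}^N\tau_i(X)$, and suppose the system has an encoding map $\pi:\Omega\to X$ which is measurable from the cylinder $\sigma$-algebra of $\Omega$ to the Borel $\sigma$-algebra of $X$. Let $p_1,\dots,p_N>0$ with $\sum_ip_i=1$ and let $\mu_{(p)}$ be the Bernoulli measure on $\Omega$. Then $\nu:=\mu_{(p)}\circ\pi^{-1}$ satisfies $$\nu=\sum_{i=1}^Np_i\,\nu\circ\tau_i^{-1},$$ and the support of $\nu$ equals $X$.
   Context: $\Omega=\{1,\dots,N\}^{\mathbb{N}}$ with the $\sigma$-algebra generated by cylinder sets. An encoding: for every $\omega=(\omega_1\omega_2\dots)\in\Omega$, the set $\bigcap_{n\ge1}\tau_{\omega_1}\tau_{\omega_2}\cdots\tau_{\omega_n}(X)$ is a singleton $\{\pi(\omega)\}$. The Bernoulli measure $\mu_{(p)}$ is the unique probability measure on $\Omega$ with $\mu_{(p)}(\{\eta:\eta_1=\omega_1,\dots,\eta_n=\omega_n\})=p_{\omega_1}\cdots p_{\omega_n}$. *)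

From HB Require Import structures.
From mathcomp Require Import all_boot all_order all_algebra.
From mathcomp Require Import all_classical all_reals all_analysis.
Set Implicit Arguments. Unset Strict Implicit. Unset Printing Implicit Defensive.
Import Order.TTheory GRing.Theory Num.Theory.
Local Open Scope classical_set_scope.
Local Open Scope ring_scope.

(* 'I_N.+1 is inhabited: make it a pointedType (needed for the sigma-algebra type) *)
HB.instance Definition _ (n : nat) := isPointed.Build 'I_n.+1 ord0.

(* Symbols are 'I_N.+1, i.e. N.+1 >= 1 maps tau_0, ..., tau_N. *)
Definition cylinder (N : nat) (w : seq 'I_N.+1) : set (nat -> 'I_N.+1) :=
  [set eta | forall k, (k < size w)%N -> eta k = nth ord0 w k].

Definition cylinders (N : nat) : set (set (nat -> 'I_N.+1)) := range (@cylinder N).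

Notation Omega N := (g_sigma_algebraType (@cylinders N)).

Notation borel X := (g_sigma_algebraType (@open X)).

Definition word_image (X : Type) (N : nat) (tau : 'I_N.+1 -> X -> X)
  (w : seq 'I_N.+1) : set X :=
  foldr (fun i A => tau i @` A) setT w.

Definition is_encoding (X : Type) (N : nat) (tau : 'I_N.+1 -> X -> X)
  (pi : (nat -> 'I_N.+1) -> X) : Prop :=
  forall omega, \bigcap_(n in [set n | (0 < n)%N]) word_image tau (mkseq omega n)
                = [set pi omega].

Definition measure_support (R : realType) (X : topologicalType) (nu : set X -> \bar R) : set X :=
  [set x | forall U, open U -> U x -> (0 < nu U)%E].

From HB Require Import structures.
From mathcomp Require Import all_boot all_order all_algebra.
From mathcomp Require Import all_classical all_reals all_analysis.
Import Order.TTheory GRing.Theory Num.Theory.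
Local Open Scope classical_set_scope.
Local Open Scope ring_scope.

(* The invariance equation comes from splitting a sequence into its first
   letter and its shift: pi eta = tau_(eta_0) (pi (shift eta)), and the
   Bernoulli measure makes the first letter independent of the shift.  Full
   support: every x is pi om for some address om (the maps cover X), the
   compact sets tau_(om_0) ... tau_(om_(n-1)) (X) decrease to {x} and so
   eventually lie in any open U containing x, whence nu U is at least the
   measure p_(om_0) ... p_(om_(n-1)) > 0 of the corresponding cylinder. *)

Definition shift_seq {T : Type} (eta : nat -> T) : nat -> T := eta \o succn.

Lemma mkseq_cons {T : Type} (f : nat -> T) n :
  mkseq f n.+1 = f 0%N :: mkseq (shift_seq f) n.
Proof. by rewrite /mkseq /= -add1n iotaDl -map_comp. Qed.

Section word_image.
Context {X : Type} {N : nat} {tau : 'I_N.+1 -> X -> X}.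

Lemma word_image_rcons w j : word_image tau (rcons w j) `<=` word_image tau w.
Proof. by elim: w => [|i w IHw] //= x [y /IHw wy <-]; exists y. Qed.

Lemma word_image_mkseq_nested om m n : (m <= n)%N ->
  word_image tau (mkseq om n) `<=` word_image tau (mkseq om m).
Proof.
move=> /subnKC <-; elim: (n - m)%N => [|k IHk]; first by rewrite addn0.
by rewrite addnS mkseqS => x /word_image_rcons /IHk.
Qed.

(* Write x = tau_(i_0) x_1, x_1 = tau_(i_1) x_2, ... and take om k := i_k. *)
Lemma exists_address :
  [set: X] = \bigcup_(i in [set: 'I_N.+1]) (tau i @` [set: X]) ->
  forall x, exists om, forall n, word_image tau (mkseq om n) x.
Proof.
move=> cover x.
have preimage y : exists ij : 'I_N.+1 * X, y = tau ij.1 ij.2.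
  have : [set: X] y by [].
  by rewrite cover => -[i _ [z _ <-]]; exists (i, z).
have [g gK] := choice preimage.
pose xs k := iter k (fun y => (g y).2) x.
pose om k := (g (xs k)).1.
suff addr k n : word_image tau (mkseq (fun j => om (j + k)%N) n) (xs k).
  by exists om => n; have := addr 0%N n; under eq_mkseq do rewrite addn0.
elim: n k => [|n IHn] k //; rewrite mkseq_cons /=.
exists (xs k.+1); last by rewrite /om /xs /= -gK.
by under eq_mkseq do rewrite /shift_seq /= addSnnS; exact: IHn.
Qed.

End word_image.

Section encoding.
Context {X : Type} {N : nat} {tau : 'I_N.+1 -> X -> X}.
(* The space after the brace matters: "{pi" is a token of generic_quotient. *)
Context { pi : (nat -> 'I_N.+1) -> X}.
Hypothesis pi_enc : is_encoding tau pi.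

Lemma encoding_word_image om n : word_image tau (mkseq om n) (pi om).
Proof.
case: n => [|n] //.
by have : [set pi om] (pi om) by []; rewrite -pi_enc; apply.
Qed.

Lemma encoding_address om x :
  (forall n, word_image tau (mkseq om n) x) -> pi om = x.
Proof.
by move=> omx; have : [set pi om] x by rewrite -pi_enc => n _; exact: omx.
Qed.

Lemma encoding_cylinder w : pi @` cylinder w `<=` word_image tau w.
Proof.
move=> _ [eta etaw <-].
suff <- : mkseq eta (size w) = w by exact: encoding_word_image.
apply: (eq_from_nth (x0 := ord0)); rewrite size_mkseq // => k kw.
by rewrite nth_mkseq // etaw.
Qed.

Lemma encoding_shift eta : pi eta = tau (eta 0%N) (pi (shift_seq eta)).
Proof.
apply: encoding_address => -[|n] //; rewrite mkseq_cons /=.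
by exists (pi (shift_seq eta)) => //; exact: encoding_word_image.
Qed.

Lemma preimage_encoding (A : set X) :
  pi @^-1` A = \big[setU/set0]_(i < N.+1)
    (cylinder [:: i] `&` shift_seq @^-1` (pi @^-1` (tau i @^-1` A))).
Proof.
rewrite -(bigcup_pred xpredT); apply/seteqP; split => eta /=.
  rewrite encoding_shift => Aeta; exists (eta 0%N) => //.
  by split => // -[].
by move=> [i _ [/(_ 0%N isT) /= eta0 Aeta]]; rewrite encoding_shift eta0.
Qed.

End encoding.

Lemma compact_nested_closed_subset_open (T : ptopologicalType)
    (K : nat -> set T) (U : set T) :
  compact [set: T] -> (forall n, closed (K n)) ->
  (forall m n, (m <= n)%N -> K n `<=` K m) ->
  \bigcap_n K n `<=` U -> open U -> exists n, K n `<=` U.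
Proof.
move=> cT Kcl Knested KU oU; apply: contrapT => noKU.
pose F n := K n `&` ~` U.
suff [x Fx] : \bigcap_(n in [set: nat]) F n !=set0.
  by apply: (Fx 0%N I).2; apply: KU => n _; exact: (Fx n I).1.
move: cT; rewrite compact_In0 => /(_ nat [set: nat] F); apply.
  exists F => [n _|n _]; last by rewrite setTI.
  by apply: closedI => //; exact: open_closedC.
(* By nesting, a finite subfamily contains its member of largest index. *)
move=> D _; pose m := (\max_(i <- finmap.enum_fset D) i)%N.
have [x [Kx nUx]] : F m !=set0.
  apply: contrapT => F0; apply: noKU; exists m => x Kx.
  by apply: contrapT => nUx; apply: F0; exists x.
exists x => i iD; split => //; apply: (Knested i m) Kx.
exact: (leq_bigmax_seq (F := id)).
Qed.

Section encoding_topology.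
Context {X : ptopologicalType} {N : nat} {tau : 'I_N.+1 -> X -> X}.
Hypotheses (X_hausdorff : hausdorff_space X) (X_compact : compact [set: X]).
Hypothesis tau_cont : forall i, continuous (tau i).

Lemma word_image_compact w : compact (word_image tau w).
Proof.
elim: w => [|i w IHw] //=.
by apply: continuous_compact => //; exact: continuous_subspaceT.
Qed.

Lemma encoding_word_image_subset_open { pi : (nat -> 'I_N.+1) -> X}
    (pi_enc : is_encoding tau pi) {om : nat -> 'I_N.+1} {U : set X} :
  open U -> U (pi om) -> exists n, word_image tau (mkseq om n) `<=` U.
Proof.
move=> oU Upi; apply: compact_nested_closed_subset_open => //.
- by move=> n; apply: compact_closed => //; exact: word_image_compact.
- by move=> m n; exact: word_image_mkseq_nested.
- by move=> x /(_ _ I)-/(encoding_address pi_enc) <-.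
Qed.

End encoding_topology.

Lemma measurable_fun_continuous_borel (X Y : ptopologicalType) (f : X -> Y) :
  continuous f -> measurable_fun [set: borel X] (f : borel X -> borel Y).
Proof.
move=> fcont; apply: measurability; first exact: erefl.
move=> _ [B oB <-].
by apply: sub_gen_smallest; rewrite setTI; exact: open_comp.
Qed.

Section cylinders.
Variable N : nat.
Implicit Types (v w : seq 'I_N.+1).

Lemma cylinder_cons i w :
  cylinder (i :: w) = cylinder [:: i] `&` shift_seq @^-1` cylinder w.
Proof.
apply/seteqP; split => eta /=.
  move=> etaw; split => [[|k] // _|k kw]; first exact: (etaw 0%N).
  exact: (etaw k.+1).
by move=> [eta0 etaw] [|k] kw; [exact: eta0 | exact: etaw].
Qed.

Lemma cylinderI v w : (size v <= size w)%N ->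
  cylinder v `&` cylinder w = if take (size v) w == v then cylinder w else set0.
Proof.
move=> vw; case: eqP => [wv | wNv].
  apply/setIidr => eta etaw k kv; rewrite -wv nth_take //.
  by apply: etaw; exact: leq_trans kv vw.
apply/seteqP; split => // eta [etav etaw]; apply: wNv.
apply: (eq_from_nth (x0 := ord0)); rewrite size_takel // => k kv.
by rewrite nth_take // -etaw ?etav //; exact: leq_trans kv vw.
Qed.

Lemma setI_closed_cylinders0 : setI_closed (@cylinders N `|` [set set0]).
Proof.
have closedI v w : (size v <= size w)%N ->
    (@cylinders N `|` [set set0]) (cylinder v `&` cylinder w).
  by move=> vw; rewrite cylinderI //; case: eqP; [left; exists w | right].
move=> A B [[v _ <-]|->]; last by rewrite set0I; right.
move=> [[w _ <-]|->]; last by rewrite setI0; right.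
by case: (leqP (size v) (size w)) => [|/ltnW] /closedI //; rewrite setIC.
Qed.

Lemma g_sigma_cylinders0 :
  <<s @cylinders N `|` [set set0] >> = <<s @cylinders N >>.
Proof.
apply/seteqP; split; apply: smallest_sub; try exact: smallest_sigma_algebra.
  by move=> C [cC|->]; [exact: sub_gen_smallest | exact: sigma_algebra0].
by move=> C cC; apply: sub_gen_smallest; left.
Qed.

Lemma measurable_cylinder w : measurable (cylinder w : set (Omega N)).
Proof. by apply: sub_gen_smallest; exists w. Qed.

Lemma measurable_shift_seq :
  measurable_fun [set: Omega N] (shift_seq : Omega N -> Omega N).
Proof.
apply: measurability; first exact: erefl.
move=> _ [_ [w _ <-] <-]; rewrite setTI.
have -> : shift_seq @^-1` cylinder w =
    \bigcup_(i in [set: 'I_N.+1]) (cylinder (i :: w) : set (Omega N)).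
  apply/seteqP; split => eta /= etaw.
    by exists (eta 0%N) => //; rewrite cylinder_cons; split => // -[].
  by case: etaw => i _; rewrite cylinder_cons => -[].
by apply: fin_bigcup_measurable => // i _; exact: measurable_cylinder.
Qed.

Lemma measurable_cylinder_shift_seq w (B : set (Omega N)) : measurable B ->
  measurable ((cylinder w : set (Omega N)) `&` shift_seq @^-1` B).
Proof.
move=> mB; apply: measurableI; first exact: measurable_cylinder.
by rewrite -[_ @^-1` _]setTI; exact: measurable_shift_seq.
Qed.

End cylinders.

Section bernoulli.
Context {R : realType} {N : nat} (p : 'I_N.+1 -> R).
Variable mu : probability (Omega N) R.
Hypothesis mu_bern : forall w, mu (cylinder w) = (\prod_(i <- w) p i)%:E.

(* Both sides are finite measures in B that agree on the cylinders, a
   pi-system generating the sigma-algebra. *)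
Lemma bernoulli_cylinder_shift i (B : set (Omega N)) : measurable B ->
  mu (cylinder [:: i] `&` shift_seq @^-1` B) = ((p i)%:E * mu B)%E.
Proof.
have muC : mu (cylinder [:: i]) = (p i)%:E by rewrite mu_bern big_seq1.
move=> mB; have : <<s @cylinders N `|` [set set0] >> B.
  by rewrite g_sigma_cylinders0.
move: B {mB}; apply: dynkin_induction; first by rewrite g_sigma_cylinders0.
- exact: setI_closed_cylinders0.
- by rewrite preimage_setT setIT probability_setT mule1 muC.
- move=> _ [[w _ <-]|->]; last by rewrite preimage_set0 setI0 measure0 mule0.
  by rewrite -cylinder_cons !mu_bern big_cons EFinM.
- move=> S mS muS.
  have -> : cylinder [:: i] `&` shift_seq @^-1` (~` S) =
      cylinder [:: i] `\` (cylinder [:: i] `&` shift_seq @^-1` S).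
    apply/seteqP; split => eta /= [Ceta Seta]; split => //.
      by move=> [_ /Seta].
    by move=> Seta'; apply: Seta.
  rewrite measureD ?setIA ?setIid //; first last.
  - by rewrite [X in (X < _)%E]muC ltry.
  - exact: measurable_cylinder_shift_seq.
  - exact: measurable_cylinder.
  rewrite [X in (X - _)%E]muC [X in (_ - X)%E]muS probability_setC //.
  by rewrite -(fineK (fin_num_measure mu S mS)) -!EFinM -!EFinB mulrBr mulr1.
- move=> F mF tF muF; rewrite preimage_bigcup setI_bigcupr.
  rewrite measure_bigcup //=; last 2 first.
  + by move=> n _; exact: measurable_cylinder_shift_seq.
  + by move=> n m _ _ [eta [[_ Fn] [_ Fm]]]; apply: tF => //; exists (shift_seq eta).
  rewrite measure_bigcup //= -nneseriesZl //.
  by apply: eq_eseriesr => n _; exact: muF.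
Qed.

End bernoulli.

Section encoding_measure.
Context {R : realType} {X : ptopologicalType} {N : nat}.
Variables (tau : 'I_N.+1 -> X -> X) (pi : Omega N -> borel X).
Hypotheses (pi_enc : is_encoding tau pi) (pi_meas : measurable_fun [set: Omega N] pi).
Variables (p : 'I_N.+1 -> R) (mu : probability (Omega N) R).
Hypothesis mu_bern : forall w, mu (cylinder w) = (\prod_(i <- w) p i)%:E.

Lemma measurable_preimage_encoding (A : set (borel X)) :
  measurable A -> measurable (pi @^-1` A).
Proof. by move=> mA; rewrite -[_ @^-1` _]setTI; exact: pi_meas. Qed.

Lemma encoding_measure_invariant (A : set (borel X)) :
  (forall i, continuous (tau i)) -> measurable A ->
  mu (pi @^-1` A) = (\sum_(i < N.+1) (p i)%:E * mu (pi @^-1` (tau i @^-1` A)))%E.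
Proof.
move=> tau_cont mA.
have mtauA i : measurable (pi @^-1` (tau i @^-1` A)).
  apply: measurable_preimage_encoding; rewrite -[_ @^-1` _]setTI.
  by apply: measurable_fun_continuous_borel.
rewrite (preimage_encoding pi_enc) measure_bigsetU_ord.
- by apply: eq_bigr => i _; exact: bernoulli_cylinder_shift (mtauA i).
- by move=> i; exact: measurable_cylinder_shift_seq (mtauA i).
- by move=> i j _ _ [eta [[/(_ 0%N isT) /= <- _] [/(_ 0%N isT) /= <- _]]].
Qed.

Lemma encoding_measure_support :
  hausdorff_space X -> compact [set: X] -> (forall i, continuous (tau i)) ->
  [set: X] = \bigcup_(i in [set: 'I_N.+1]) (tau i @` [set: X]) ->
  (forall i, 0 < p i) ->
  measure_support (fun A => mu (pi @^-1` A)) = [set: X].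
Proof.
move=> X_hausdorff X_compact tau_cont cover p_gt0.
apply/seteqP; split => // x _ U oU Ux.
have [om /(encoding_address pi_enc) pi_om] := exists_address cover x.
rewrite -pi_om in Ux.
have [n wU] := encoding_word_image_subset_open X_hausdorff X_compact tau_cont
  pi_enc oU Ux.
apply: (@lt_le_trans _ _ (mu (cylinder (mkseq om n)))).
  by rewrite mu_bern lte_fin; apply: prodr_gt0.
apply: le_measure; rewrite ?inE; first exact: measurable_cylinder.
  by apply: measurable_preimage_encoding; exact: sub_gen_smallest.
by move=> eta Ceta; apply: wU; apply: (encoding_cylinder pi_enc); exists eta.
Qed.

End encoding_measure.

Theorem lemma6p1 (R : realType) (X : pseudoPMetricType R) (N : nat)
  (tau : 'I_N.+1 -> X -> X)
  (hX_haus : hausdorff_space X) (hX_cpt : compact [set: X])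
  (htau_cont : forall i, continuous (tau i))
  (hcover : [set: X] = \bigcup_(i in [set: 'I_N.+1]) (tau i @` [set: X]))
  (pi : Omega N -> borel X)
  (hpi_enc : is_encoding tau pi)
  (hpi_meas : measurable_fun [set: Omega N] pi)
  (p : 'I_N.+1 -> R) (hp_pos : forall i, 0 < p i) (hp_sum : \sum_(i < N.+1) p i = 1)
  (mu : probability (Omega N) R)
  (hmu_bern : forall w : seq 'I_N.+1,
      mu (cylinder w) = (\prod_(i <- w) p i)%:E) :
  let nu : set X -> \bar R := fun A => mu (pi @^-1` A) in
  (forall A : set (borel X), measurable A ->
     nu A = (\sum_(i < N.+1) (p i)%:E * nu (tau i @^-1` A))%E)
  /\ measure_support nu = [set: X].
Proof.
move=> nu; split.
- by move=> A mA; exact: encoding_measure_invariant.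
- exact: encoding_measure_support.
Qed.
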